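(* Let $q$ be a prime power and $\ell$ an odd prime with $\gcd(\ell,q)=1$, and let $m$ be a positive integer. Assume $f=\mathrm{ord}_\ell(q)$ is odd. Let $g$ be a fixed generator of the cyclic group $\mathbb Z_{\ell^m}^*$. For $1\le r\le m$ let $\lambda(r)=\mathrm{ord}_{\ell^r}(q)$ and $\delta(r)=\phi(\ell^r)/\lambda(r)$, where $\phi$ is Euler's function. Then the sets $C_0=\{0\}$, $$C_{\ell^{m-r}g^k}=\{\ell^{m-r}g^k,\ell^{m-r}g^kq,\dots,\ell^{m-r}g^kq^{\lambda(r)-1}\},\qquad C_{-\ell^{m-r}g^k}=\{-\ell^{m-r}g^k,-\ell^{m-r}g^kq,\dots,-\ell^{m-r}g^kq^{\lambda(r)-1}\},$$ for $1\le r\le m$ and $0\le k\le\frac{\delta(r)}{2}-1$ (elements taken modulo $\ell^m$), are pairwise distinct and constitute all the distinct $q$-cyclotomic cosets modulo $\ell^m$.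
   Context: The $q$-cyclotomic coset of an integer $t$ modulo $\ell^m$ is $C_t=\{tq^i \bmod \ell^m: i\ge0\}$. *)

From mathcomp Require Import all_boot all_order all_algebra.
Set Implicit Arguments. Unset Strict Implicit. Unset Printing Implicit Defensive.
Import GRing.Theory.
Local Open Scope ring_scope.

Definition is_prime_power (q : nat) : Prop :=
  exists p k : nat, prime p /\ (0 < k)%N /\ q = (p ^ k)%N.

(* Multiplicative order of a modulo n: the least k >= 1 with a^k = 1 (mod n).
   (For coprime a, n >= 1 such k exists and is <= n, so the search over
   1..n finds it; for non-coprime a the value is irrelevant.) *)
Definition ordmod (n a : nat) : nat :=
  (find (fun k => a ^ k.+1 == 1 %[mod n]) (iota 0 n)).+1.

Definition cyc_coset (n q : nat) (t : 'Z_n) : 'Z_n -> Prop :=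
  fun x => exists i : nat, x = t * (q%:R) ^+ i.

Definition same_set (n : nat) (A B : 'Z_n -> Prop) : Prop :=
  forall x, A x <-> B x.

Definition coset_rep (l m g r k : nat) (s : bool) : 'Z_(l ^ m) :=
  let t : 'Z_(l ^ m) := ((l ^ (m - r) * g ^ k)%N)%:R in if s then - t else t.

Definition lam (l q r : nat) : nat := ordmod (l ^ r) q.
Definition dlt (l q r : nat) : nat := (totient (l ^ r) %/ lam l q r)%N.

Definition valid_idx (l q m r k : nat) : bool :=
  [&& (1 <= r)%N, (r <= m)%N & (k < dlt l q r %/ 2)%N].

(* The unit group U_r of Z/l^rZ is cyclic of order phi(l^r) and generated by
   (the image of) g, and q has odd order lambda(r) in U_r: it divides
   ord_l(q) * l^(r-1), because x = 1 (mod l^j) implies x^l = 1 (mod l^(j+1)).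
   So <q> has odd order and even index delta(r) in U_r, and the involution
   -1 = g^(phi/2) = g^(delta/2 * lambda(r)) lies in the coset g^(delta/2) <q>.
   Hence every coset of <q> is +-g^k <q> for exactly one sign and one
   k < delta/2.  A nonzero t in Z/l^mZ is l^(m-r) u with u a unit; multiplying
   by powers of q keeps the factor l^(m-r) and acts on u modulo l^r only, so
   the cosets C_t are the images of the cosets of <q> in the U_r, 1 <= r <= m. *)

From mathcomp Require Import all_boot all_order all_algebra all_fingroup all_solvable.
From mathcomp Require Import zify ring.
Set Implicit Arguments. Unset Strict Implicit. Unset Printing Implicit Defensive.
Import GRing.Theory.

Section CyclicGroup.
Local Open Scope group_scope.
Variable gT : finGroupType.
Implicit Types x y w : gT.

Lemma cycle_in_cycleE x y : y \in <[x]> -> <[y]> = <[x ^+ (#[x] %/ #[y])]>.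
Proof.
move=> yx; have /dvdnP [d ox] : #[y] %| #[x] := order_dvdG yx.
have y_gt0 : 0 < #[y] := order_gt0 y.
apply/eqP; rewrite (eq_subG_cyclic (cycle_cyclic x)) ?cycle_subG ?groupX ?cycle_id //.
have d_gt0 : 0 < d by move: (order_gt0 x); rewrite ox muln_gt0 => /andP [].
by rewrite /= -!orderE orderXdiv ox mulnK // ?mulKn // dvdn_mulr.
Qed.

Lemma cycle_involutionE x w : w \in <[x]> -> #[w] = 2 -> w = x ^+ (#[x] %/ 2).
Proof.
move=> wx ow; have := cycle_in_cycleE wx; rewrite ow => eq_w.
have := cycle_id w; rewrite eq_w => /cyclePmin [j].
rewrite orderE -eq_w -orderE ow; case: j => [_ w1|[|//] _ ->]; last by rewrite expg1.
by move: ow; rewrite w1 expg0 order1.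
Qed.

Section Decomposition.
Variables (x y w : gT) (d : nat).
Hypotheses (yx : y \in <[x]>) (wx : w \in <[x]>) (odd_y : odd #[y]) (ow : #[w] = 2).
Hypothesis ox : #[x] = (d * #[y])%N.

Let h := d %/ 2.

Let d_even : d = (h * 2)%N.
Proof.
have /dvdnP [c ox2] : (2 %| #[x])%N by rewrite -ow; exact: order_dvdG.
have : odd #[x] = false by rewrite ox2 oddM andbF.
by rewrite ox oddM odd_y andbT => ev; rewrite /h divnK // dvdn2 ev.
Qed.

Let w_x : w = x ^+ (h * #[y]).
Proof. by rewrite (cycle_involutionE wx ow) ox d_even mulnAC mulnK. Qed.

Let cycle_y : <[y]> = <[x ^+ d]>.
Proof. by rewrite (cycle_in_cycleE yx) ox mulnK. Qed.

Let odd_y_half : #[y] = (#[y]./2 * 2).+1.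
Proof. by rewrite -[LHS]odd_double_half odd_y muln2 add1n. Qed.

Let mem_y j : x ^+ (d * j) \in <[y]>.
Proof. by rewrite cycle_y expgM mem_cycle. Qed.

Lemma cycle_decomposition u : u \in <[x]> ->
  exists (s : bool) k i, (k < h)%N /\ u = w ^+ s * x ^+ k * y ^+ i.
Proof.
case/cycleP=> a ->.
have d_gt0 : (0 < d)%N by move: (order_gt0 x); rewrite ox muln_gt0 => /andP [].
move: (divn_eq a d) (ltn_pmod a d_gt0); move: (a %/ d) (a %% d) => j c a_eq c_lt.
have [c_lt_h | /subnKC c_eq] := ltnP c h.
  have /cycleP [i yi] := mem_y j; exists false, c, i; split=> //.
  by rewrite -yi expg0 mul1g -expgD a_eq mulnC addnC.
(* x ^+ a = w * x ^+ (c - h) * x ^+ (d * (j + (#[y] + 1) / 2)), up to x ^+ #[x] = 1. *)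
have /cycleP [i yi] := mem_y (j + #[y]./2 + 1); exists true, (c - h), i; split.
  by move: c_lt; rewrite -c_eq d_even; lia.
rewrite -yi expg1 w_x -!expgD -[x ^+ a]mulg1 -(expg_order x) -expgD; congr (x ^+ _).
rewrite a_eq -{1}c_eq; move: (c - h) (#[y]./2) odd_y_half => k p oy.
by rewrite ox d_even oy -[(p * 2).+1]addn1; ring.
Qed.

Let exp_mod_d (s : bool) k j : (k < h)%N ->
  (h * #[y] * s + k + d * j) %% d = (s * h + k)%N.
Proof.
move=> k_lt; move: (#[y]./2) odd_y_half => p ->; rewrite d_even -[(p * 2).+1]addn1.
have -> : (h * (p * 2 + 1) * s + k + h * 2 * j = (s * p + j) * (h * 2) + (s * h + k))%N.
  by ring.
by rewrite modnMDl modn_small //; case: s; lia.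
Qed.

Lemma cycle_decomposition_uniq (s s' : bool) k k' i : (k < h)%N -> (k' < h)%N ->
  w ^+ s' * x ^+ k' = w ^+ s * x ^+ k * y ^+ i -> s = s' /\ k = k'.
Proof.
move=> k_lt k'_lt; have /cycleP [j ->] : y ^+ i \in <[x ^+ d]> by rewrite -cycle_y mem_cycle.
rewrite w_x -!expgM -!expgD => /eqP; rewrite eq_expg_mod_order => /eqP eq_mod.
have := congr1 (modn^~ d) eq_mod; rewrite !modn_dvdm ?ox ?dvdn_mulr //.
rewrite -[X in X %% d = _]addn0 -(muln0 d) !exp_mod_d // {eq_mod}.
by case: s; case: s'; lia.
Qed.

End Decomposition.
End CyclicGroup.

Lemma totient_ltn n : 1 < n -> totient n < n.
Proof.
move=> n_gt1; rewrite totient_count_coprime big_ltn ?(ltnW n_gt1) //.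
rewrite /coprime gcdn0 gtn_eqF // add0n.
apply: leq_ltn_trans (_ : \sum_(1 <= i < n) 1 < n).
  by apply: leq_sum => i _; exact: leq_b1.
by rewrite sum_nat_const_nat muln1 subn1 prednK ?(ltnW n_gt1).
Qed.

(* Junk value: the identity when a is not coprime to n. *)
Definition nat_unit n (a : nat) : {unit 'Z_n} := insubd (1%g : {unit 'Z_n}) (a%:R : 'Z_n)%R.

Section NatUnit.
Variable n : nat.
Hypothesis n_gt1 : 1 < n.
Local Notation nat_unit := (@nat_unit n).

Lemma Zp_nat_eq (a b : nat) : ((a%:R : 'Z_n) == b%:R)%R = (a == b %[mod n]).
Proof. by rewrite -val_eqE /= !val_Zp_nat. Qed.

Lemma Zp_nat_eq0 (a : nat) : ((a%:R : 'Z_n) == 0)%R = (n %| a).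
Proof. by rewrite -[0%R]/(0%:R)%R Zp_nat_eq mod0n. Qed.

Lemma Zp_nat_eqN1 (a : nat) : n %| a.+1 -> (a%:R : 'Z_n)%R = (- 1)%R.
Proof. by move=> n_a; apply/eqP; rewrite -GRing.addr_eq0 natr1 Zp_nat_eq0. Qed.

Lemma val_nat_unit a : coprime a n -> val (nat_unit a) = (a%:R)%R.
Proof. by move=> a_n; rewrite /nat_unit insubdK // unfold_in unitZpE // coprime_sym. Qed.

Lemma nat_unitX a k : coprime a n -> nat_unit (a ^ k) = (nat_unit a ^+ k)%g.
Proof.
by move=> a_n; apply: val_inj; rewrite FinRing.val_unitX !val_nat_unit ?coprimeXl ?natrX.
Qed.

Lemma nat_unitM a b : coprime a n -> coprime b n ->
  nat_unit (a * b) = (nat_unit a * nat_unit b)%g.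
Proof.
by move=> a_n b_n; apply: val_inj; rewrite FinRing.val_unitM !val_nat_unit ?coprimeMl ?a_n ?natrM.
Qed.

Lemma eq_nat_unit a b : coprime a n -> coprime b n ->
  (nat_unit a == nat_unit b) = (a == b %[mod n]).
Proof. by move=> a_n b_n; rewrite -val_eqE /= !val_nat_unit // Zp_nat_eq. Qed.

Lemma nat_unit1 : nat_unit 1 = 1%g.
Proof. by apply: val_inj; rewrite val_nat_unit ?coprime1n. Qed.

Lemma nat_unit_eq1 a k : coprime a n -> (nat_unit a ^+ k == 1)%g = (a ^ k == 1 %[mod n]).
Proof. by move=> a_n; rewrite -nat_unitX // -nat_unit1 eq_nat_unit ?coprimeXl ?coprime1n. Qed.

Lemma order_nat_unit a : coprime a n -> #[nat_unit a]%g = ordmod n a.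
Proof.
move=> a_n; have o_gt0 := order_gt0 (nat_unit a).
have o_le : #[nat_unit a]%g <= totient n.
  by rewrite -card_units_Zp ?(ltnW n_gt1) //; apply: subset_leq_card; rewrite subsetT.
rewrite /ordmod (eq_find (a2 := fun j => #[nat_unit a]%g %| j.+1)); last first.
  by move=> j; rewrite -nat_unit_eq1 // order_dvdn.
move: #[_]%g o_gt0 o_le => o o_gt0 o_le.
(* ordmod searches 1..n, and the order is at most totient n < n. *)
have o_lt : o.-1 < n by rewrite prednK // (leq_trans o_le) // ltnW // totient_ltn.
have F_min := before_find 0 (a := fun j => o %| j.+1) (s := iota 0 n) (i := o.-1).
have F_nth := nth_find 0 (s := iota 0 n) (a := fun j => o %| j.+1).
rewrite has_find size_iota in F_nth; move: (find _ _) F_min F_nth => F F_min F_nth.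
case: (ltngtP F o.-1) => [F_lt | F_gt | ->]; last by rewrite prednK.
- have F_n : F < n := ltn_trans F_lt o_lt.
  move: (F_nth F_n); rewrite nth_iota // add0n.
  by move/(dvdn_leq (ltn0Sn F)); lia.
- by move: (F_min F_gt); rewrite nth_iota // add0n prednK // dvdnn.
Qed.

Lemma ordmodP a k : coprime a n -> (a ^ k == 1 %[mod n]) = (ordmod n a %| k).
Proof. by move=> a_n; rewrite -order_nat_unit // order_dvdn nat_unit_eq1. Qed.

End NatUnit.

Lemma ordmod_dvd_sub1 n a k : 1 < n -> coprime a n ->
  (n %| a ^ k - 1) = (ordmod n a %| k).
Proof.
move=> n_gt1 a_n; have a_gt0 : 0 < a.
  by rewrite lt0n; apply: contraTneq a_n => ->; rewrite /coprime gcd0n gtn_eqF.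
by rewrite -ordmodP // eqn_mod_dvd // expn_gt0 a_gt0.
Qed.

Section UnitsDecomposition.
Variables (n g q w : nat).
Hypotheses (n_gt2 : 2 < n) (g_n : coprime g n) (g_gen : ordmod n g = totient n).
Hypotheses (q_n : coprime q n) (odd_q : odd (ordmod n q)) (w_N1 : n %| w.+1).

Let n_gt1 : 1 < n := ltnW n_gt2.
Let x := nat_unit n g.
Let y := nat_unit n q.
Let neg1 := nat_unit n w.
Let d := totient n %/ ordmod n q.

Let w_n : coprime w n.
Proof. exact: coprime_dvdr w_N1 (coprimenS w). Qed.

Let mem_x u : u \in <[x]>%g.
Proof.
suff -> : <[x]>%g = [set: {unit 'Z_n}] by rewrite inE.
apply/eqP; rewrite eqEcard subsetT (card_units_Zp (ltnW n_gt1)).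
by rewrite /= -[#|_|]/#[x]%g order_nat_unit // g_gen.
Qed.

Let order_neg1 : #[neg1]%g = 2.
Proof.
have val_neg1 : val neg1 = (- 1)%R by rewrite val_nat_unit // Zp_nat_eqN1.
apply/(prime_nt_dvdP (isT : prime 2)).
  rewrite order_eq1; apply/eqP => /(congr1 val); rewrite val_neg1 FinRing.val_unit1 => /eqP.
  by rewrite eq_sym -GRing.addr_eq0 -[(1 + 1)%R]/(2%:R)%R (Zp_nat_eq0 n_gt1) => /dvdn_leq; lia.
by rewrite order_dvdn; apply/eqP/val_inj; rewrite FinRing.val_unitX val_neg1 expr2 mulrNN mulr1.
Qed.

Let index_y : #[x]%g = (d * #[y]%g)%N.
Proof.
rewrite !order_nat_unit // g_gen divnK // -ordmodP //.
exact/eqP/Euler_exp_totient.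
Qed.

Let odd_y : odd #[y]%g.
Proof. by rewrite order_nat_unit. Qed.

Let nat_unit_word (s : bool) k i :
  nat_unit n (w ^ s * g ^ k * q ^ i) = (neg1 ^+ s * x ^+ k * y ^+ i)%g.
Proof. by rewrite !nat_unitM ?coprimeMl ?coprimeXl ?w_n ?g_n ?q_n // !nat_unitX. Qed.

Lemma units_decomposition u : coprime u n ->
  exists (s : bool) k i, k < d %/ 2 /\ u = w ^ s * g ^ k * q ^ i %[mod n].
Proof.
move=> u_n; have [s [k [i [k_lt u_eq]]]] := cycle_decomposition (mem_x y) (mem_x neg1)
  odd_y order_neg1 index_y (mem_x (nat_unit n u)).
by exists s, k, i; split=> //; apply/eqP; rewrite -eq_nat_unit ?nat_unit_word ?u_eq //
  ?coprimeMl ?coprimeXl ?w_n ?g_n ?q_n.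
Qed.

Lemma units_decomposition_uniq (s s' : bool) k k' i : k < d %/ 2 -> k' < d %/ 2 ->
  w ^ s' * g ^ k' = w ^ s * g ^ k * q ^ i %[mod n] -> s = s' /\ k = k'.
Proof.
move=> k_lt k'_lt /eqP; rewrite -eq_nat_unit ?coprimeMl ?coprimeXl ?w_n ?g_n ?q_n //.
rewrite -(muln1 (_ * g ^ k')) -(expn0 q) !nat_unit_word expg0 mulg1 => /eqP.
exact: (cycle_decomposition_uniq (mem_x y) (mem_x neg1) odd_y order_neg1 index_y k_lt k'_lt).
Qed.

End UnitsDecomposition.

Lemma dvdn_expn_sub1 l r a : 0 < r -> l ^ r %| a - 1 -> l ^ r.+1 %| a ^ l - 1.
Proof.
move=> r_gt0; case: a => [_|a]; first by case: l => [|l]; rewrite ?expn0 ?exp0n ?subnn ?dvdn0.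
rewrite subn1 /= => lr_a; rewrite -(exp1n l) subn_exp subn1 /= expnSr dvdn_mul //.
have a1 : a.+1 = 1 %[mod l].
  have /dvdnP [c ->] : l %| a := dvdn_trans (dvdn_exp2l l r_gt0) lr_a.
  by rewrite -addn1 modnMDl.
rewrite /dvdn -modn_summ (eq_bigr (fun=> 1 %% l)) => [|i _].
  by rewrite sum_nat_const card_ord modnMr.
by rewrite exp1n muln1 -modnXm a1 modnXm exp1n.
Qed.

Lemma dvdn_expn_pexp_sub1 l r j a : 0 < r -> l ^ r %| a - 1 -> l ^ (r + j) %| a ^ (l ^ j) - 1.
Proof.
move=> r_gt0 lr_a; elim: j => [|j IHj]; first by rewrite addn0 expn1.
by rewrite addnS [l ^ j.+1]expnSr expnM; apply: dvdn_expn_sub1; rewrite ?addn_gt0 ?r_gt0.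
Qed.

Section PrimePower.
Variable l : nat.
Hypothesis l_prime : prime l.

Let l_gt1 : 1 < l := prime_gt1 l_prime.

Lemma pexp_gt1 r : 0 < r -> 1 < l ^ r.
Proof. by move=> r_gt0; rewrite -(exp1n r) ltn_exp2r. Qed.

Lemma odd_ordmod_pexp q r : odd l -> coprime q l -> odd (ordmod l q) -> 0 < r ->
  odd (ordmod (l ^ r) q).
Proof.
move=> l_odd q_l f_odd r_gt0; have q_lr : coprime q (l ^ r) by rewrite coprime_pexpr.
apply: (@dvdn_odd _ (ordmod l q * l ^ r.-1)); last by rewrite oddM oddX f_odd l_odd orbT.
rewrite -ordmod_dvd_sub1 ?pexp_gt1 // expnM -[r in l ^ r](prednK r_gt0) -add1n.
by apply: dvdn_expn_pexp_sub1; rewrite // expn1 ordmod_dvd_sub1.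
Qed.

Lemma ordmod_pexp_totient g r m : coprime g l -> 0 < r -> r <= m ->
  ordmod (l ^ m) g = totient (l ^ m) -> ordmod (l ^ r) g = totient (l ^ r).
Proof.
move=> g_l r_gt0 r_le_m g_gen; have m_gt0 := leq_trans r_gt0 r_le_m.
have g_lr : coprime g (l ^ r) by rewrite coprime_pexpr.
apply/eqP; rewrite eqn_dvd -ordmodP ?Euler_exp_totient ?pexp_gt1 //=.
have g_lm : coprime g (l ^ m) by rewrite coprime_pexpr.
have /(dvdn_expn_pexp_sub1 (m - r) r_gt0) : l ^ r %| g ^ ordmod (l ^ r) g - 1.
  by rewrite ordmod_dvd_sub1 ?pexp_gt1.
rewrite subnKC // -expnM ordmod_dvd_sub1 ?pexp_gt1 // g_gen !totient_pfactor //.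
have -> : m.-1 = r.-1 + (m - r) by lia.
by rewrite expnD mulnA dvdn_pmul2r ?expn_gt0 ?prime_gt0 // eqxx.
Qed.
End PrimePower.

Lemma dvdn_pexpMr l c e u : 1 < l -> coprime u l -> (l ^ c %| l ^ e * u) = (c <= e).
Proof.
by move=> l_gt1 u_l; rewrite Gauss_dvdl ?dvdn_Pexp2l // coprimeXl // coprime_sym.
Qed.

Lemma eqmod_pexpM_exp l m e e' u u' : 1 < l -> coprime u l -> coprime u' l ->
  e < m -> e' < m -> l ^ e * u = l ^ e' * u' %[mod l ^ m] -> e = e'.
Proof.
move=> l_gt1 u_l u'_l e_lt e'_lt eq_mod.
have dvd_eq c : c <= m -> (l ^ c %| l ^ e * u) = (l ^ c %| l ^ e' * u').
  move=> /(dvdn_exp2l l) c_m.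
  by rewrite /dvdn -(modn_dvdm (l ^ e * u) c_m) eq_mod modn_dvdm.
apply/anti_leq/andP; split.
  by have := dvd_eq _ e'_lt; rewrite !dvdn_pexpMr // ltnn => /negbT; rewrite -leqNgt.
by have := dvd_eq _ e_lt; rewrite !dvdn_pexpMr // ltnn => /esym /negbT; rewrite -leqNgt.
Qed.

Lemma eqn_mod_pmul2l p a b d : 0 < p -> (p * a == p * b %[mod p * d]) = (a == b %[mod d]).
Proof. by move=> p_gt0; rewrite -!muln_modr eqn_pmul2l. Qed.

Local Open Scope ring_scope.

Section Cosets.
Variables (n q : nat).
Local Notation C := (@cyc_coset n q).

Lemma cyc_coset0 : same_set (C 0) (fun x => x = 0).
Proof. by move=> x; split=> [[i ->]|->]; [rewrite mul0r | exists 0%N; rewrite mul0r]. Qed.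

Lemma cyc_coset_refl t : C t t.
Proof. by exists 0%N; rewrite mulr1. Qed.

Lemma cyc_coset_period t L : (0 < L)%N -> t * q%:R ^+ L = t ->
  same_set (C t) (fun x => exists2 j, (j < L)%N & x = t * q%:R ^+ j).
Proof.
move=> L_gt0 tL x; split=> [[i ->] | [j _ ->]]; last by exists j.
exists (i %% L)%N; first exact: ltn_pmod.
rewrite {1}(divn_eq i L) exprD mulrA; congr (_ * _).
by elim: (i %/ L)%N => [|p IHp]; rewrite ?mulr1 // mulSn exprD mulrA tL.
Qed.

Lemma cyc_coset_mulX t L i : (0 < L)%N -> q%:R ^+ L = 1 :> 'Z_n ->
  same_set (C (t * q%:R ^+ i)) (C t).
Proof.
move=> L_gt0 qL x; split=> [[j ->] | [j ->]]; first by exists (i + j)%N; rewrite exprD mulrA.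
exists (i * L.-1 + j)%N; rewrite -mulrA -exprD addnA -{1}(muln1 i) -mulnDr add1n prednK //.
by rewrite exprD exprM -exprM mulnC exprM qL expr1n mul1r.
Qed.

End Cosets.

Lemma coset_repE l m g r k s : (1 < l ^ m)%N ->
  coset_rep l m g r k s = (l ^ (m - r) * ((l ^ m).-1 ^ s * g ^ k))%:R.
Proof.
move=> N_gt1; rewrite /coset_rep; case: s; rewrite ?expn1 ?expn0 ?mul1n //.
have N_dvd : (l ^ m %| (l ^ m).-1.+1)%N by rewrite prednK ?(ltnW N_gt1).
by rewrite mulnCA [RHS]natrM (Zp_nat_eqN1 N_gt1 N_dvd) mulN1r natrM.
Qed.

Local Close Scope ring_scope.

Section CyclotomicCosets.
Variables q l m g : nat.
Hypotheses (l_prime : prime l) (l_odd : odd l) (l_q : coprime l q) (m_gt0 : 0 < m).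
Hypotheses (f_odd : odd (ordmod l q)) (g_l : coprime g l).
Hypothesis g_gen : ordmod (l ^ m) g = totient (l ^ m).

Local Notation N := (l ^ m).
Local Notation w := (l ^ m).-1.
Local Notation C := (@cyc_coset N q).
Local Notation R := (coset_rep l m g).

Let l_gt1 : 1 < l := prime_gt1 l_prime.
Let N_gt1 : 1 < N := pexp_gt1 l_prime m_gt0.
Let q_l : coprime q l. Proof. by rewrite coprime_sym. Qed.

Let w_l : coprime w l.
Proof.
by rewrite -(coprime_pexpr _ _ m_gt0) -{2}(prednK (ltnW N_gt1)) coprimenS.
Qed.

Let word_l (s : bool) k i : coprime (w ^ s * g ^ k * q ^ i) l.
Proof. by rewrite !coprimeMl !coprimeXl. Qed.

Let Rq r k s i : (R r k s * q%:R ^+ i = (l ^ (m - r) * (w ^ s * g ^ k * q ^ i))%:R)%R.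
Proof. by rewrite coset_repE // -natrX -natrM !mulnA. Qed.

Let eqmod_level r a b : r <= m ->
  (l ^ (m - r) * a == l ^ (m - r) * b %[mod N]) = (a == b %[mod l ^ r]).
Proof.
move=> r_le; have -> : N = l ^ (m - r) * l ^ r by rewrite -expnD subnK.
by rewrite eqn_mod_pmul2l ?expn_gt0 ?prime_gt0.
Qed.

Let l_gt2 : 2 < l.
Proof. by move: l_gt1 l_odd; rewrite leq_eqVlt => /orP [/eqP <- | ]. Qed.

Section Level.
Variable r : nat.
Hypotheses (r_gt0 : 0 < r) (r_le : r <= m).

Let lr_gt2 : 2 < l ^ r.
Proof. by apply: (leq_trans l_gt2); rewrite -{1}(expn1 l) leq_exp2l. Qed.

Let g_gen_r : ordmod (l ^ r) g = totient (l ^ r).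
Proof. exact: (ordmod_pexp_totient l_prime g_l r_gt0 r_le g_gen). Qed.

Let lam_odd : odd (ordmod (l ^ r) q).
Proof. exact: (odd_ordmod_pexp l_prime l_odd q_l f_odd r_gt0). Qed.

Let lr_N1 : l ^ r %| w.+1.
Proof. by rewrite prednK ?(ltnW N_gt1) // dvdn_exp2l. Qed.

Lemma level_decomposition u : coprime u l ->
  exists (s : bool) k i, k < dlt l q r %/ 2 /\ u = w ^ s * g ^ k * q ^ i %[mod l ^ r].
Proof. by move=> u_l; apply: units_decomposition; rewrite ?coprime_pexpr. Qed.

Lemma level_decomposition_uniq (s s' : bool) k k' i :
  k < dlt l q r %/ 2 -> k' < dlt l q r %/ 2 ->
  w ^ s' * g ^ k' = w ^ s * g ^ k * q ^ i %[mod l ^ r] -> s = s' /\ k = k'.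
Proof. by apply: units_decomposition_uniq; rewrite ?coprime_pexpr. Qed.

End Level.

Lemma coset_rep_period r k s : valid_idx l q m r k ->
  same_set (C (R r k s)) (fun x => exists2 j, j < lam l q r & x = (R r k s * q%:R ^+ j)%R).
Proof.
case/and3P=> r_gt0 r_le _; apply: cyc_coset_period; first exact: ltn0Sn.
have /eqP q_lam : q ^ lam l q r == 1 %[mod l ^ r].
  by rewrite ordmodP ?pexp_gt1 ?coprime_pexpr.
rewrite -[X in (_ = X)%R]mulr1 -(expr0 (q%:R : 'Z_N)) !Rq; apply/eqP.
by rewrite Zp_nat_eq // eqmod_level // -modnMmr q_lam modnMmr.
Qed.

Lemma coset_rep_neq0 r k s : valid_idx l q m r k -> ~ same_set (C 0%R) (C (R r k s)).
Proof.
case/and3P=> r_gt0 r_le _ eq_C.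
have /(cyc_coset0 _ _).1 : C 0%R (R r k s) by apply/eq_C/cyc_coset_refl.
rewrite -[R r k s]mulr1 -(expr0 (q%:R : 'Z_N)) Rq => /eqP.
by rewrite Zp_nat_eq0 // dvdn_pexpMr // leqNgt ltn_subrL r_gt0 (leq_trans r_gt0 r_le).
Qed.

Lemma coset_rep_inj r k s r' k' s' : valid_idx l q m r k -> valid_idx l q m r' k' ->
  (r, k, s) != (r', k', s') -> ~ same_set (C (R r k s)) (C (R r' k' s')).
Proof.
case/and3P=> r_gt0 r_le k_lt /and3P [r'_gt0 r'_le k'_lt] neq eq_C.
have [i] : C (R r k s) (R r' k' s') by apply/eq_C/cyc_coset_refl.
rewrite -[R r' k' s']mulr1 -(expr0 (q%:R : 'Z_N)) !Rq => /eqP; rewrite Zp_nat_eq // => eq_mod.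
have e_eq : m - r' = m - r.
  apply: (eqmod_pexpM_exp l_gt1 (word_l _ _ _) (word_l _ _ _) _ _ (eqP eq_mod));
  by rewrite ltn_subrL ?r_gt0 ?r'_gt0 m_gt0.
have r_eq : r' = r by apply/eqP; rewrite -(eqn_sub2lE r'_le r_le) e_eq.
subst r'; move: eq_mod neq; rewrite eqmod_level // expn0 muln1 => /eqP.
by case/(level_decomposition_uniq r_gt0 r_le k_lt k'_lt) => -> ->; rewrite eqxx.
Qed.

Lemma cyc_coset_cover (t : 'Z_N) : same_set (C t) (C 0%R) \/
  exists r k s, valid_idx l q m r k /\ same_set (C t) (C (R r k s)).
Proof.
have [-> | t_neq0] := eqVneq t 0%R; [by left | right].
have t_gt0 : 0 < val t by rewrite lt0n; apply: contra t_neq0 => /eqP t0; apply/eqP/val_inj.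
have [u l_u t_eq] := pfactor_coprime l_prime t_gt0; set e := logn l _ in t_eq.
have e_lt : e < m.
  rewrite -(ltn_exp2l _ _ l_gt1) -[X in _ < X](Zp_cast N_gt1).
  apply: leq_ltn_trans (ltn_ord t); rewrite t_eq leq_pmull // lt0n.
  by apply: contraTneq l_u => ->; rewrite /coprime gcdn0 gtn_eqF.
have r_gt0 : 0 < m - e by rewrite subn_gt0.
have u_l : coprime u l by rewrite coprime_sym.
have [s [k [i [k_lt u_eq]]]] := level_decomposition r_gt0 (leq_subr e m) u_l.
exists (m - e), k, s; split; first by rewrite /valid_idx r_gt0 leq_subr k_lt.
have q_unit : ((q%:R : 'Z_N) ^+ ordmod N q = 1)%R.
  by apply/eqP; rewrite -natrX -[1%R]/(1%:R)%R Zp_nat_eq // ordmodP // coprime_pexpr.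
suff -> : t = (R (m - e) k s * q%:R ^+ i)%R by apply: cyc_coset_mulX (ltn0Sn _) q_unit.
rewrite Rq -[t]natr_Zp t_eq mulnC -{1}(subKn (ltnW e_lt)); apply/eqP.
by rewrite Zp_nat_eq // eqmod_level ?leq_subr // u_eq.
Qed.

End CyclotomicCosets.

Local Open Scope ring_scope.

Theorem lemma4p3 (q l m g : nat) :
  is_prime_power q -> prime l -> odd l -> coprime l q -> (0 < m)%N ->
  odd (ordmod l q) ->
  coprime g l -> ordmod (l ^ m) g = totient (l ^ m) ->
  let C := cyc_coset q in
  let R := coset_rep l m g in
  same_set (C 0) (fun x => x = 0) /\
  (forall r k s, valid_idx l q m r k ->
     same_set (C (R r k s))
       (fun x => exists2 j : nat, (j < lam l q r)%N & x = R r k s * (q%:R) ^+ j)) /\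
  (forall r k s, valid_idx l q m r k -> ~ same_set (C 0) (C (R r k s))) /\
  (forall r k s r' k' s', valid_idx l q m r k -> valid_idx l q m r' k' ->
     (r, k, s) != (r', k', s') -> ~ same_set (C (R r k s)) (C (R r' k' s'))) /\
  (forall t : 'Z_(l ^ m), same_set (C t) (C 0) \/
     exists r k s, valid_idx l q m r k /\ same_set (C t) (C (R r k s))).
Proof.
move=> _ l_prime l_odd l_q m_gt0 f_odd g_l g_gen C R.
split; first exact: cyc_coset0.
split; first by move=> r k s; apply: coset_rep_period.
split; first by move=> r k s; apply: coset_rep_neq0.
split; first by move=> r k s r' k' s'; apply: coset_rep_inj.
by move=> t; apply: cyc_coset_cover.
Qed.
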